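(* Let $V$ be a finite-dimensional vector space over $k$ with basis $\xi_1,\dots,\xi_n$ and dual basis $\eta_1,\dots,\eta_n$ of $V^*$, and let $\mathfrak a=\mathfrak a(V\oplus V^* )$ be the Weyl Lie algebra. Let $M$ be a vector space, $\mu:\mathfrak a\otimes M\to M$ linear, and let $a:\mathrm{Sym}(V)\otimes M\to\mathrm{Div}(V)\otimes M$ be the corresponding map $a(\xi^\alpha\otimes x)=\sum_\sigma\xi^{[\sigma]}\otimes\mu(\xi^\alpha\eta^\sigma\otimes x)$ (assumed to have finitely many nonzero terms for each $x$). Then $\mu$ defines a representation of the Lie algebra $\mathfrak a$ on $M$ if and only if $[a_1,a_2]=a'-a''$.
   Context: The Weyl algebra $A$ is generated by $\xi_1,\dots,\xi_n,\eta_1,\dots,\eta_n$ with relations $\xi_i\xi_j=\xi_j\xi_i$, $\eta_i\eta_j=\eta_j\eta_i$, $\eta_i\xi_j-\xi_j\eta_i=\delta_{ij}$; the Weyl Lie algebra $\mathfrak a$ is $A$ with the commutator bracket; it has basis the ordered monomials $\xi^\alpha\eta^\sigma=\xi_1^{\alpha_1}\cdots\xi_n^{\alpha_n}\eta_1^{\sigma_1}\cdots\eta_n^{\sigma_n}$ ($\alpha,\sigma\in\mathbb N^n$). $\mathrm{Sym}(V)=k[\xi_1,\dots,\xi_n]$; $\mathrm{Div}(V)$ is the divided power algebra with basis $\xi^{[\sigma]}$, multiplication $\xi^{[\nu]}\xi^{[\mu]}=\binom{\nu+\mu}{\nu}\xi^{[\nu+\mu]}$ and comultiplication $\Delta(\xi^{[\rho]})=\sum_{\nu+\mu=\rho}\xi^{[\nu]}\otimes\xi^{[\mu]}$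 (multi-index binomials are products of coordinatewise ones); on $\mathrm{Sym}(V)$, $m$ is multiplication and $\Delta(\xi^\beta)=\sum_\epsilon\binom{\beta}{\epsilon}\xi^\epsilon\otimes\xi^{\beta-\epsilon}$; $\mathrm{avg}:\mathrm{Sym}(V)\to\mathrm{Div}(V)$, $\xi^\epsilon\mapsto\epsilon!\,\xi^{[\epsilon]}$ with $\epsilon!=\prod\epsilon_i!$. Write $S=\mathrm{Sym}(V)$, $D=\mathrm{Div}(V)$, $\tau$ the symmetry of the first two factors. $a_2=\mathrm{id}_S\otimes a$, $a_1=\tau(\mathrm{id}_S\otimes a)\tau$, and $[a_1,a_2]=a_1a_2-a_2a_1:S\otimes S\otimes M\to D\otimes D\otimes M$. $a'$ is the composite $S\otimes S\otimes M\xrightarrow{\mathrm{id}\otimes\Delta\otimes\mathrm{id}}S^{\otimes3}\otimes M\xrightarrow{\tau\otimes\mathrm{id}\otimes\mathrm{id}}S^{\otimes3}\otimes M\xrightarrow{\mathrm{id}\otimes m\otimes\mathrm{id}}S\otimes S\otimes M\xrightarrow{\mathrm{id}\otimes a}S\otimes D\otimes M\xrightarrow{\mathrm{id}\otimes\Delta\otimes\mathrm{id}}S\otimes D\otimes D\otimes M\xrightarrow{\mathrm{avg}\otimes\mathrm{id}}D^{\otimes3}\otimes M\xrightarrow{m\otimes\mathrm{id}\otimes\mathrm{id}}D\otimes D\otimes M$, and $a''=\tau a'\tau$. A representation means $\mu([X,Y]\otimes x)=\mu(X\otimes\mu(Y\otimes x))-\mu(Y\otimes\mu(X\otimes x))$.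 *)

From HB Require Import structures.
From mathcomp Require Import all_boot all_order all_algebra.
Set Implicit Arguments. Unset Strict Implicit. Unset Printing Implicit Defensive.
Import Order.TTheory GRing.Theory.
Local Open Scope ring_scope.

(* A multi-index alpha in N^n; xi^alpha, eta^sigma, xi^[sigma] are all
   indexed by such. *)
Definition mono (n : nat) := {ffun 'I_n -> nat}.

Definition madd n (a b : mono n) : mono n := [ffun i => (a i + b i)%N].
Definition msub n (a b : mono n) : mono n := [ffun i => (a i - b i)%N].
Definition mle n (a b : mono n) : bool := [forall i, (a i <= b i)%N].
Definition mfact n (a : mono n) : nat := (\prod_(i < n) (a i)`!)%N.
Definition mbin n (a b : mono n) : nat := (\prod_(i < n) 'C(a i, b i))%N.
Definition msum n (a : mono n) : nat := (\sum_(i < n) a i)%N.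
Definition subm n (b : mono n) : seq (mono n) :=
  map (fun e : {ffun 'I_n -> 'I_(msum b).+1} => [ffun i => nat_of_ord (e i)] : mono n)
      (enum [pred e : {ffun 'I_n -> 'I_(msum b).+1} | [forall i, (e i <= b i)%N]]).

(* An element of (tensor product of factors with basis indexed by I) (x) M
   is represented as a finite formal sum  sum_j (basis_{i_j} (x) m_j),
   i.e. a list of pairs (i_j, m_j).  Two such represent the same element iff
   their coefficient functions [coef] agree. *)
Definition coef (I : eqType) (M : zmodType) (s : seq (I * M)) (i : I) : M :=
  \sum_(p <- s | p.1 == i) p.2.
(* extension to formal sums of a map given on pure tensors  basis_i (x) m *)
Definition lift (I J M : Type) (f : I -> M -> seq (J * M)) (s : seq (I * M)) :
  seq (J * M) := flatten [seq f p.1 p.2 | p <- s].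
Definition fsub (I : Type) (M : zmodType) (s t : seq (I * M)) : seq (I * M) :=
  s ++ [seq (p.1, - p.2) | p <- t].

(* Product of ordered monomials in the Weyl algebra A:
   (xi^al eta^si)(xi^be eta^ta)
     = sum_{e <= si, e <= be} e! C(si,e) C(be,e) xi^(al+be-e) eta^(si+ta-e),
   the normal-ordering formula following from eta_i xi_j - xi_j eta_i = delta_ij. *)
Section Weyl.
Variables (k : fieldType) (n : nat).
Definition wmono := (mono n * mono n)%type.   (* (alpha, sigma) <-> xi^alpha eta^sigma *)
Definition welt := seq (k * wmono).

Definition wprod (m1 m2 : wmono) : welt :=
  [seq ((mfact e * mbin m1.2 e * mbin m2.1 e)%:R,
        (madd m1.1 (msub m2.1 e), madd (msub m1.2 e) m2.2))
  | e <- subm m1.2 & mle e m2.1].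

Definition wbracket (X Y : welt) : welt :=
  flatten [seq [seq (p.1 * q.1 * r.1, r.2) | r <- wprod p.2 q.2] ++
               [seq (- (p.1 * q.1 * r.1), r.2) | r <- wprod q.2 p.2]
          | p <- X, q <- Y].
End Weyl.

Section Rep.
Variables (k : fieldType) (n : nat) (M : lmodType k).
(* mu : a (x) M -> M linear is given by its values mu (xi^al eta^si) : M -> M *)
Variable mu : mono n -> mono n -> {linear M -> M}.

Definition muA (X : welt k n) (x : M) : M := \sum_(p <- X) p.1 *: mu p.2.1 p.2.2 x.

Definition is_representation : Prop :=
  forall (X Y : welt k n) (x : M),
    muA (wbracket X Y) x = muA X (muA Y x) - muA Y (muA X x).

(* supp al x : a finite list containing every sigma with mu(xi^al eta^si (x) x) <> 0
   (exists by the finiteness assumption); used to write a as a finite sum. *)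
Variable supp : mono n -> M -> seq (mono n).

Definition covers_support : Prop :=
  forall (al si : mono n) (x : M), mu al si x != 0 -> si \in supp al x.

Definition a_map (al : mono n) (x : M) : seq (mono n * M) :=
  [seq (si, mu al si x) | si <- undup (supp al x)].

Definition tau_b (i : mono n * mono n) (x : M) : seq ((mono n * mono n) * M) :=
  [:: ((i.2, i.1), x)].
Definition a2_b (i : mono n * mono n) (x : M) : seq ((mono n * mono n) * M) :=
  [seq ((i.1, p.1), p.2) | p <- a_map i.2 x].
Definition a2 := lift a2_b.
Definition a1 (s : seq ((mono n * mono n) * M)) := lift tau_b (a2 (lift tau_b s)).
Definition tau := lift tau_b.

Definition a12 (s : seq ((mono n * mono n) * M)) := fsub (a1 (a2 s)) (a2 (a1 s)).

(* id (x) Delta_Sym (x) id *)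
Definition st1 (i : mono n * mono n) (x : M) : seq ((mono n * mono n * mono n) * M) :=
  [seq (((i.1, e), msub i.2 e), (mbin i.2 e)%:R *: x) | e <- subm i.2].
Definition st2 (i : mono n * mono n * mono n) (x : M) :=
  [:: (((i.1.2, i.1.1), i.2), x)].
(* id (x) m_Sym (x) id *)
Definition st3 (i : mono n * mono n * mono n) (x : M) :=
  [:: ((i.1.1, madd i.1.2 i.2), x)].
Definition st4 := a2_b.
(* id (x) Delta_Div (x) id *)
Definition st5 (i : mono n * mono n) (x : M) : seq ((mono n * mono n * mono n) * M) :=
  [seq (((i.1, e), msub i.2 e), x) | e <- subm i.2].
(* avg (x) id *)
Definition st6 (i : mono n * mono n * mono n) (x : M) :=
  [:: (i, (mfact i.1.1)%:R *: x)].
(* m_Div (x) id (x) id *)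
Definition st7 (i : mono n * mono n * mono n) (x : M) :=
  [:: ((madd i.1.1 i.1.2, i.2), (mbin (madd i.1.1 i.1.2) i.1.1)%:R *: x)].

Definition a' (s : seq ((mono n * mono n) * M)) :=
  lift st7 (lift st6 (lift st5 (lift st4 (lift st3 (lift st2 (lift st1 s)))))).
Definition a'' (s : seq ((mono n * mono n) * M)) := tau (a' (tau s)).

Definition bracket_identity : Prop :=
  forall (s : seq ((mono n * mono n) * M)) (i : mono n * mono n),
    coef (a12 s) i = coef (fsub (a' s) (a'' s)) i.
End Rep.

From Pilot Require Import Defs.
From HB Require Import structures.
From mathcomp Require Import all_boot all_order all_algebra.
Set Implicit Arguments. Unset Strict Implicit. Unset Printing Implicit Defensive.
Import GRing.Theory.
Local Open Scope ring_scope.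

(* Both sides of the equivalence are additive in the tensor argument, so it
   suffices to evaluate them on ξ^α ⊗ ξ^β ⊗ x and read off the coefficient of
   ξ^[ρ] ⊗ ξ^[σ].  For [a_1, a_2] it is
   μ(ξ^α η^ρ) μ(ξ^β η^σ) x - μ(ξ^β η^σ) μ(ξ^α η^ρ) x.  In a', the coproduct of
   Div(V) followed by avg and multiplication sends ξ^ε ⊗ ξ^[τ] to
   Σ_ν ε! C(ε+ν, ε) ξ^[ε+ν] ⊗ ξ^[τ-ν], of which only ν = ρ - ε contributes, so the
   coefficient is Σ_ε ε! C(ρ, ε) C(β, ε) μ(ξ^(α+β-ε) η^(ρ-ε+σ)) x: μ applied to
   the normally ordered product (ξ^α η^ρ)(ξ^β η^σ); a'' gives the product in the
   opposite order.  Hence the identity says that μ respects the commutator of any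
   two monomials, which by bilinearity of the bracket is the representation
   property. *)

Section SumsOverSeq.
Variable V : zmodType.

Lemma big_pred1_uniq (T : eqType) (s : seq T) (t : T) (F : T -> V) :
  uniq s -> \sum_(u <- s | u == t) F u = if t \in s then F t else 0.
Proof.
move=> s_uniq; case: ifP => [t_s | t_notin_s].
  by rewrite -big_filter (filter_pred1_uniq s_uniq t_s) big_seq1.
by rewrite big1_seq // => u /andP[/eqP-> ]; rewrite t_notin_s.
Qed.

Lemma big_pred1_undup (T : eqType) (s : seq T) (t : T) (F : T -> V) :
  (F t != 0 -> t \in s) -> \sum_(u <- undup s | u == t) F u = F t.
Proof.
move=> supp_s; rewrite big_pred1_uniq ?undup_uniq // mem_undup.
by case: ifP => // t_notin_s; apply/esym/eqP; apply: contraFT t_notin_s.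
Qed.

Lemma big_andb_const (I : Type) (r : seq I) (b : bool) (P : pred I) (F : I -> V) :
  \sum_(i <- r | b && P i) F i = if b then \sum_(i <- r | P i) F i else 0.
Proof. by case: b; rewrite ?big_pred0_eq. Qed.

End SumsOverSeq.

Lemma big_lift (I J M : Type) (V : zmodType) (f : I -> M -> seq (J * M))
    (s : seq (I * M)) (P : pred (J * M)) (G : J * M -> V) :
  \sum_(p <- Defs.lift f s | P p) G p = \sum_(q <- s) \sum_(p <- f q.1 q.2 | P p) G p.
Proof. by rewrite /Defs.lift big_flatten big_map. Qed.

Lemma lift_cat (I J M : Type) (f : I -> M -> seq (J * M)) (s t : seq (I * M)) :
  Defs.lift f (s ++ t) = Defs.lift f s ++ Defs.lift f t.
Proof. by rewrite /Defs.lift map_cat flatten_cat. Qed.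

Lemma coef_cat (I : eqType) (M : zmodType) (s t : seq (I * M)) i : coef (s ++ t) i = coef s i + coef t i.
Proof. by rewrite /coef big_cat. Qed.

Lemma coef_fsub (I : eqType) (M : zmodType) (s t : seq (I * M)) i : coef (fsub s t) i = coef s i - coef t i.
Proof. by rewrite /fsub /coef big_cat big_map sumrN. Qed.

Lemma coef_morph_cat (I J : eqType) (M : zmodType) (F : seq (I * M) -> seq (J * M)) :
    {morph F : s t / s ++ t} -> F [::] = [::] ->
  forall s j, coef (F s) j = \sum_(p <- s) coef (F [:: p]) j.
Proof.
move=> F_cat F_nil; elim=> [|p s IHs] j; first by rewrite F_nil big_nil /coef big_nil.
by rewrite -cat1s F_cat coef_cat IHs big_cons.
Qed.

Section MultiIndices.
Variable n : nat.
Implicit Types a b e r s t v : mono n.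

Lemma mem_subm b e : (e \in subm b) = mle e b.
Proof.
have le_msum i : (b i <= msum b)%N by rewrite /msum (bigD1 i) //= leq_addr.
apply/mapP/forallP => [[f] | e_le_b].
  by rewrite mem_enum => /forallP f_le_b -> i; rewrite ffunE.
have e_lt i : (e i < (msum b).+1)%N by rewrite ltnS (leq_trans (e_le_b i)).
exists [ffun i => inord (e i)].
  by rewrite mem_enum; apply/forallP => i; rewrite ffunE inordK.
by apply/ffunP => i; rewrite !ffunE inordK.
Qed.

Lemma uniq_subm b : uniq (subm b).
Proof.
rewrite map_inj_uniq ?enum_uniq // => f g /ffunP fg; apply/ffunP => i.
by apply: val_inj; have := fg i; rewrite !ffunE.
Qed.

Lemma big_subm_sym (V : zmodType) a b (F : mono n -> V) :
  \sum_(e <- subm a | mle e b) F e = \sum_(e <- subm b | mle e a) F e.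
Proof.
rewrite -big_filter -[RHS]big_filter; apply: perm_big.
apply: uniq_perm; rewrite ?filter_uniq ?uniq_subm // => e.
by rewrite !mem_filter !mem_subm andbC.
Qed.

Lemma madd_msubKC e r : mle e r -> madd e (msub r e) = r.
Proof. by move=> /forallP le_er; apply/ffunP => i; rewrite !ffunE subnKC. Qed.

Lemma madd_msub_eq e v r s t : mle v t ->
  ((madd e v, msub t v) == (r, s)) =
  [&& v == msub r e, mle e r & t == madd (msub r e) s].
Proof.
move=> /forallP le_vt; apply/idP/idP.
  move=> /eqP[<- <-]; apply/and3P; split.
  - by apply/eqP/ffunP => i; rewrite !ffunE addKn.
  - by apply/forallP => i; rewrite !ffunE leq_addr.
  - by apply/eqP/ffunP => i; rewrite !ffunE addKn subnKC.
move=> /and3P[/eqP-> le_er /eqP->]; rewrite madd_msubKC //.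
by apply/eqP; congr (_, _); apply/ffunP => i; rewrite !ffunE addKn.
Qed.

End MultiIndices.

Section StructureMaps.
Variables (k : fieldType) (n : nat) (M : lmodType k).
Implicit Types (e t r s : mono n) (L : seq ((mono n * mono n) * M)).

Lemma coef_tau L r s : coef (tau L) (r, s) = coef L (s, r).
Proof.
rewrite /coef big_lift [RHS]big_mkcond; apply: eq_bigr => -[[a b] y] _.
by rewrite big_mkcond big_seq1 /= !xpair_eqE andbC.
Qed.

Lemma coef_st7_st6_st5 L r s :
  coef (Defs.lift (@st7 k n M) (Defs.lift (@st6 k n M) (Defs.lift (@st5 k n M) L))) (r, s) =
  \sum_(p <- L | mle p.1.1 r && (p.1.2 == madd (msub r p.1.1) s))
     (mbin r p.1.1 * mfact p.1.1)%:R *: p.2.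
Proof.
rewrite /coef !big_lift [RHS]big_mkcond; apply: eq_bigr => -[[e t] y] _ /=.
rewrite big_map; under eq_bigr do rewrite big_seq1 big_mkcond big_seq1 /=.
set X := if _ then _ else _.
(* Only v = r - e contributes to the coefficient of (r, s). *)
rewrite (eq_big_seq (fun v => if v == msub r e then X else 0)) => [|v].
  rewrite -big_mkcond big_pred1_uniq ?uniq_subm // mem_subm /X.
  case: ifP => // /negP not_le; case: ifP => // /andP[_ /eqP t_eq].
  by case: not_le; rewrite t_eq; apply/forallP => i; rewrite !ffunE leq_addr.
rewrite mem_subm => le_vt; rewrite madd_msub_eq // /X.
case: eqP => //= ->; case: ifP => // /andP[le_er _].
by rewrite madd_msubKC // natrM -scalerA.
Qed.

End StructureMaps.

Section Representation.
Variables (k : fieldType) (n : nat) (M : lmodType k).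
Variable mu : mono n -> mono n -> {linear M -> M}.
Implicit Types (al be ro si : mono n) (X Y : welt k n) (x : M).

Lemma muA_wbracket X Y x :
  muA mu (wbracket X Y) x = \sum_(p <- X) \sum_(q <- Y)
    (p.1 * q.1) *: (muA mu (wprod k p.2 q.2) x - muA mu (wprod k q.2 p.2) x).
Proof.
rewrite /muA /wbracket big_flatten /= big_allpairs_dep.
apply: eq_bigr => p _; apply: eq_bigr => q _.
rewrite big_cat !big_map /= scalerBr !scaler_sumr -sumrN.
by congr (_ + _); apply: eq_bigr => r _; rewrite ?scaleNr scalerA.
Qed.

Lemma muA_muA X Y x :
  muA mu X (muA mu Y x) =
  \sum_(p <- X) \sum_(q <- Y) (p.1 * q.1) *: mu p.2.1 p.2.2 (mu q.2.1 q.2.2 x).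
Proof.
apply: eq_bigr => p _; rewrite linear_sum scaler_sumr.
by apply: eq_bigr => q _; rewrite linearZ scalerA.
Qed.

Definition is_representation_on_monomials : Prop :=
  forall al ro be si x,
    mu al ro (mu be si x) - mu be si (mu al ro x) =
    muA mu (wprod k (al, ro) (be, si)) x - muA mu (wprod k (be, si) (al, ro)) x.

Lemma is_representationP :
  is_representation mu <-> is_representation_on_monomials.
Proof.
split=> [mu_rep al ro be si x | mu_rep X Y x].
  have := mu_rep [:: (1, (al, ro))] [:: (1, (be, si))] x.
  by rewrite muA_wbracket !muA_muA !big_seq1 /= mul1r !scale1r => ->.
rewrite muA_wbracket !muA_muA [in X in _ - X]exchange_big -sumrB.
apply: eq_bigr => -[a [al ro]] _; rewrite -sumrB.
apply: eq_bigr => -[b [be si]] _ /=.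
by rewrite [b * a]mulrC -scalerBr mu_rep.
Qed.

Variable supp : mono n -> M -> seq (mono n).
Hypothesis mu_supp : covers_support mu supp.
Implicit Types (s : seq ((mono n * mono n) * M)).

Lemma coef_a_map be x si : coef (a_map mu supp be x) si = mu be si x.
Proof. by rewrite /coef big_map; apply: big_pred1_undup => /mu_supp. Qed.

Lemma mem_supp_comp (f : M -> M) be si x :
  f 0 = 0 -> f (mu be si x) != 0 -> si \in supp be x.
Proof. by move=> f0 nz; apply: mu_supp; apply: contraNneq nz => ->; rewrite f0. Qed.

Lemma coef_a2 s ro si :
  coef (a2 mu supp s) (ro, si) = \sum_(p <- s | p.1.1 == ro) mu p.1.2 si p.2.
Proof.
rewrite /coef /a2 big_lift [RHS]big_mkcond; apply: eq_bigr => -[[al be] x] _ /=.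
rewrite big_map; under eq_bigl do rewrite xpair_eqE.
by case: (al =P ro) => _; [apply: coef_a_map | apply: big_pred0].
Qed.

Lemma coef_a1 s ro si :
  coef (a1 mu supp s) (ro, si) = \sum_(p <- s | p.1.2 == si) mu p.1.1 ro p.2.
Proof.
rewrite /a1 coef_tau coef_a2 big_lift [RHS]big_mkcond.
by apply: eq_bigr => -[[al be] x] _; rewrite big_mkcond big_seq1.
Qed.

Lemma coef_a1a2 s ro si :
  coef (a1 mu supp (a2 mu supp s)) (ro, si) =
  \sum_(p <- s) mu p.1.1 ro (mu p.1.2 si p.2).
Proof.
rewrite coef_a1 /a2 big_lift; apply: eq_bigr => -[[al be] x] _ /=.
by rewrite !big_map; apply/big_pred1_undup/mem_supp_comp; rewrite linear0.
Qed.

Lemma coef_a2a1 s ro si :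
  coef (a2 mu supp (a1 mu supp s)) (ro, si) =
  \sum_(p <- s) mu p.1.2 si (mu p.1.1 ro p.2).
Proof.
rewrite coef_a2 /a1 /a2 !big_lift; apply: eq_bigr => -[[al be] x] _ /=.
rewrite big_seq1 !big_map; under eq_bigr do rewrite big_mkcond big_seq1 /=.
by rewrite -big_mkcond; apply/big_pred1_undup/mem_supp_comp; rewrite linear0.
Qed.

Lemma coef_a'_seq1 al be x ro si :
  coef (a' mu supp [:: ((al, be), x)]) (ro, si) = muA mu (wprod k (al, ro) (be, si)) x.
Proof.
rewrite /a' coef_st7_st6_st5 !big_lift big_seq1 big_map.
under eq_bigr => e _ do rewrite /= !big_seq1 /= !big_map /= big_andb_const.
rewrite -big_mkcond.
under eq_bigr => e _.
  rewrite big_pred1_undup; last by apply: mem_supp_comp; rewrite scaler0.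
  over.
rewrite big_subm_sym /muA /wprod [RHS]big_map [RHS]big_filter /=.
by apply: eq_bigr => e _; rewrite linearZ scalerA -natrM [(mbin ro e * _)%N]mulnC.
Qed.

Lemma coef_a' s ro si :
  coef (a' mu supp s) (ro, si) = \sum_(p <- s) muA mu (wprod k (p.1.1, ro) (p.1.2, si)) p.2.
Proof.
rewrite coef_morph_cat // => [|s1 s2]; last by rewrite /a' !lift_cat.
by apply: eq_bigr => -[[al be] x] _; apply: coef_a'_seq1.
Qed.

Lemma coef_a'' s ro si :
  coef (a'' mu supp s) (ro, si) = \sum_(p <- s) muA mu (wprod k (p.1.2, si) (p.1.1, ro)) p.2.
Proof.
rewrite /a'' coef_tau coef_a' /tau big_lift.
by apply: eq_bigr => -[[al be] x] _; rewrite big_seq1.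
Qed.

Lemma bracket_identityP : bracket_identity mu supp <-> is_representation_on_monomials.
Proof.
rewrite /bracket_identity /a12; split=> [bracket al ro be si x | mu_rep s [ro si]].
  have := bracket [:: ((al, be), x)] (ro, si).
  by rewrite !coef_fsub coef_a1a2 coef_a2a1 coef_a' coef_a'' !big_seq1.
rewrite !coef_fsub coef_a1a2 coef_a2a1 coef_a' coef_a'' -!sumrB.
by apply: eq_bigr => -[[al be] x] _; apply: mu_rep.
Qed.

End Representation.

Theorem proposition7p1 (k : fieldType) (n : nat) (M : lmodType k)
  (mu : mono n -> mono n -> {linear M -> M})
  (supp : mono n -> M -> seq (mono n)) :
  covers_support mu supp ->
  (is_representation mu <-> bracket_identity mu supp).
Proof.
move=> mu_supp.
exact: iff_trans (is_representationP mu) (iff_sym (bracket_identityP mu_supp)).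
Qed.
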